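(* Let $D\subseteq\mathbb{R}$, let $f:D\to\mathbb{R}$ be ordinal decreasing, and let $g(x)=f(x)-x$ for $x\in D$. Then $g$ is ordinal decreasing and $o(g)\le o(f)$.
   Context: For $h:D\to\mathbb{R}$, a strictly decreasing sequence $x_1>x_2>\cdots$ in $D$ is $h$-bad if $h(x_1)>h(x_2)>\cdots$; $h$ is ordinal decreasing if there is no infinite $h$-bad sequence. For ordinal decreasing $h$, the tree $T_h$ has a vertex for each finite $h$-bad sequence (the empty sequence being the root), the parent of $\langle x_1>\cdots>x_n\rangle$ being $\langle x_1>\cdots>x_{n-1}\rangle$; each vertex gets the ordinal height $o(v)=\sup_{w\text{ child of }v}(o(w)+1)$, and $o(h)$ is the height of the root. *)

From Stdlib Require Import Reals List.
Import ListNotations.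
Open Scope R_scope.

(* D : R -> Prop is the domain; h : R -> R, only its values on D matter. *)

Fixpoint bad (D : R -> Prop) (h : R -> R) (s : list R) : Prop :=
  match s with
  | [] => True
  | x :: t =>
      D x /\ match t with
             | [] => True
             | y :: _ => y < x /\ h y < h x
             end /\ bad D h t
  end.

Definition infinite_bad (D : R -> Prop) (h : R -> R) (x : nat -> R) : Prop :=
  forall n, D (x n) /\ x (S n) < x n /\ h (x (S n)) < h (x n).

Definition ordinal_decreasing (D : R -> Prop) (h : R -> R) : Prop :=
  ~ exists x : nat -> R, infinite_bad D h x.

(* Ordinals as well-founded trees (Brouwer trees with arbitrary branching):
   [osup I F] denotes sup_{i : I} (F i + 1). *)
Inductive Ord : Type :=
  osup : forall Ix : Type, (Ix -> Ord) -> Ord.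

(* a <= b  iff  every F i + 1 <= b, i.e. every F i < b, i.e. F i <= G j for some j *)
Fixpoint ord_le (a b : Ord) {struct a} : Prop :=
  match a with
  | osup Ix F =>
      forall i : Ix, match b with
                    | osup J G => exists j : J, ord_le (F i) (G j)
                    end
  end.

(* Vertices of T_h are the finite h-bad lists; the children of s are the
   bad lists s ++ [x].  [height D h s a] : the ordinal height o(s) of the
   vertex s is (represented by) a, i.e. a = sup_{children w} (o(w) + 1). *)
Inductive height (D : R -> Prop) (h : R -> R) : list R -> Ord -> Prop :=
  | height_intro : forall (s : list R)
      (F : {x : R | bad D h (s ++ [x])} -> Ord),
      (forall w, height D h (s ++ [proj1_sig w]) (F w)) ->
      height D h s (osup _ F).

(* A descent y < x with f y - y < f x - x also has f y < f x - (x - y) < f x, so every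
   g-bad sequence is f-bad: T_g is a subtree of T_f.  Hence g has no infinite bad sequence,
   the heights in T_g exist by well-founded induction, and a subtree has smaller height. *)
From Stdlib Require Import Reals List Lra Classical ClassicalEpsilon ChoiceFacts.
Import ListNotations.
Open Scope R_scope.

Lemma not_Acc_descending_chain (A : Type) (R : A -> A -> Prop) (x : A) :
  ~ Acc R x -> exists u : nat -> A, u 0%nat = x /\ forall n, R (u (S n)) (u n).
Proof.
  intros Hx.
  assert (Hdescend : forall z : {y | ~ Acc R y},
             exists w : {y | ~ Acc R y}, R (proj1_sig w) (proj1_sig z)).
  { intros [z Hz]. apply NNPP. intros Hno. apply Hz. constructor. intros y Hy.
    apply NNPP. intros Hy'. apply Hno. now exists (exist _ y Hy'). }
  destruct (functional_choice_imp_functional_dependent_choice choice _ Hdescend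
              (exist _ x Hx)) as [u [Hu0 Hu]].
  exists (fun n => proj1_sig (u n)). split.
  - now rewrite Hu0.
  - intros n. apply Hu.
Qed.

Section Descents.

Variable D : R -> Prop.

(* Arguments ordered as [Acc] expects: [Acc (step h) x] says that no infinite h-bad
   sequence starts at [x]. *)
Definition step (h : R -> R) (y x : R) : Prop := D y /\ y < x /\ h y < h x.

Lemma Acc_step (h : R -> R) (x : R) :
  ordinal_decreasing D h -> D x -> Acc (step h) x.
Proof.
  intros Hh Dx. apply NNPP. intros Hx.
  destruct (not_Acc_descending_chain _ _ _ Hx) as [u [Hu0 Hu]].
  apply Hh. exists u. intros n. split; [| exact (proj2 (Hu n))].
  destruct n as [|n]; [now rewrite Hu0 | exact (proj1 (Hu n))].
Qed.

Lemma bad_snoc2_step (h : R -> R) (s : list R) (x y : R) :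
  bad D h (s ++ [x; y]) -> step h y x.
Proof.
  induction s as [|a s IH]; simpl.
  - intros [_ [[Hlt Hhlt] [Dy _]]]. now repeat split.
  - intros [_ [_ Hs]]. exact (IH Hs).
Qed.

Lemma bad_snoc_D (h : R -> R) (s : list R) (x : R) : bad D h (s ++ [x]) -> D x.
Proof.
  induction s as [|a s IH]; simpl; [easy |].
  intros [_ [_ Hs]]. exact (IH Hs).
Qed.

Lemma height_of_children (h : R -> R) (s : list R) :
  (forall x, bad D h (s ++ [x]) -> exists a, height D h (s ++ [x]) a) ->
  exists a, height D h s a.
Proof.
  intros Hchildren.
  assert (Hw : forall w : {x | bad D h (s ++ [x])},
             exists a, height D h (s ++ [proj1_sig w]) a)
    by (intros [x Hx]; exact (Hchildren x Hx)).
  destruct (choice _ Hw) as [F HF].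
  exists (osup _ F). now constructor.
Qed.

Lemma height_snoc_exists (h : R -> R) (x : R) :
  Acc (step h) x -> forall s, exists a, height D h (s ++ [x]) a.
Proof.
  induction 1 as [x _ IH]. intros s.
  apply height_of_children. intros y Hy.
  apply IH, (bad_snoc2_step h s). now rewrite <- app_assoc in Hy.
Qed.

Lemma height_exists (h : R -> R) (s : list R) :
  ordinal_decreasing D h -> bad D h s -> exists a, height D h s a.
Proof.
  intros Hh.
  assert (Hsnoc : forall t x, bad D h (t ++ [x]) -> exists a, height D h (t ++ [x]) a).
  { intros t x Hx. apply height_snoc_exists.
    exact (Acc_step h x Hh (bad_snoc_D h t x Hx)). }
  induction s as [|x s _] using rev_ind; intros Hs.
  - apply height_of_children. exact (Hsnoc []).
  - exact (Hsnoc s x Hs).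
Qed.

Lemma height_inv (h : R -> R) (s : list R) (b : Ord) :
  height D h s b -> exists F : {x | bad D h (s ++ [x])} -> Ord,
    b = osup _ F /\ forall w, height D h (s ++ [proj1_sig w]) (F w).
Proof. intros Hb. destruct Hb as [s F HF]. now exists F. Qed.

Section Subrelation.

Variables h h' : R -> R.
Hypothesis step_sub : forall x y, step h y x -> step h' y x.

Lemma bad_sub (s : list R) : bad D h s -> bad D h' s.
Proof.
  induction s as [|a [|b s] IH]; simpl; [easy | easy |].
  intros [Da [[Hlt Hhlt] Hs]].
  assert (Hstep : step h' b a) by (apply step_sub; split; [exact (proj1 Hs) | now split]).
  destruct Hstep as [_ Hdesc]. exact (conj Da (conj Hdesc (IH Hs))).
Qed.

Lemma ordinal_decreasing_sub : ordinal_decreasing D h' -> ordinal_decreasing D h.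
Proof.
  intros Hh' [u Hu]. apply Hh'. exists u. intros n.
  destruct (Hu n) as [Du Hn]. split; [exact Du |].
  apply step_sub. split; [exact (proj1 (Hu (S n))) | exact Hn].
Qed.

Lemma height_le_sub (s : list R) (a b : Ord) :
  height D h s a -> height D h' s b -> ord_le a b.
Proof.
  intros Ha. revert b.
  induction Ha as [s F _ IH]. intros b Hb.
  destruct (height_inv h' s b Hb) as [G [-> HG]].
  simpl. intros [x Hx].
  pose (w := exist (fun x => bad D h' (s ++ [x])) x (bad_sub _ Hx)).
  exists w. exact (IH (exist _ x Hx) (G w) (HG w)).
Qed.

End Subrelation.

End Descents.

Theorem lemma8 (D : R -> Prop) (f : R -> R) :
  ordinal_decreasing D f ->
  let g := fun x => f x - x in
  ordinal_decreasing D g /\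
  (exists a, height D g nil a) /\
  (forall a b, height D g nil a -> height D f nil b -> ord_le a b).
Proof.
  intros Hf g.
  assert (Hsub : forall x y, step D g y x -> step D f y x).
  { unfold step, g. intros x y [Dy [Hlt Hglt]]. repeat split; [exact Dy | exact Hlt | lra]. }
  assert (Hg : ordinal_decreasing D g) by exact (ordinal_decreasing_sub D g f Hsub Hf).
  split; [exact Hg | split].
  - apply (height_exists D g nil Hg). exact I.
  - intros a b. apply (height_le_sub D g f Hsub).
Qed.
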